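(* Let $X=(X_1,\dots,X_d)$ be a random vector of asset returns with finite, strictly positive variances and correlation matrix $\boldsymbol{\rho}=(\rho_{ij})$. Let $G^{\star}=\{G_1,\dots,G_K\}$ be the partition of $[d]$ into the equivalence classes of the relation $i\sim j \iff \max_{l\neq i,j}|\rho_{il}-\rho_{jl}|=0$. For a selection $J=(J(1),\dots,J(K))$ with $J(k)\in G_k$ for each $k$, let $\boldsymbol{\Sigma}_{J}$ be the $K\times K$ covariance matrix of $(X_{J(1)},\dots,X_{J(K)})$ and define the minimum (no-short-selling) portfolio variance $$\mathrm{Var}_{\min}(P_J):=\min\{\mathbf{w}^{\top}\boldsymbol{\Sigma}_J\mathbf{w}:\ \mathbf{w}\in\mathbb{R}^K,\ \mathbf{w}^{\top}\mathbf{1}=1,\ \mathbf{w}\ge 0\}.$$ Let $J^{*}$ be any selection with $J^{*}(k)\in\operatorname{argmin}_{j\in G_k}\mathrm{Var}(X_j)$ for every $k\in[K]$. Then $\mathrm{Var}_{\min}(P_{J^{*}})\le \mathrm{Var}_{\min}(P_J)$ for every selection $J$, i.e. $J^*$ minimizes $\mathrm{Var}_{\min}(P_J)$ over all selections.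
   Context: $[d]=\{1,\dots,d\}$; $\mathbf{1}$ is the all-ones vector and $\mathbf{w}\ge0$ is componentwise. *)

From HB Require Import structures.
From mathcomp Require Import all_boot all_order all_algebra.
From mathcomp Require Import all_classical all_reals all_analysis.
Unset Printing Implicit Defensive.
Import Order.TTheory GRing.Theory Num.Theory.
Local Open Scope ring_scope.

Section defs.
Context {dT : measure_display} {T : measurableType dT} {R : realType}.
Variable (P : probability T R).
Context {d : nat}.
Variable (X : 'I_d -> T -> R).

(* covariance (real-valued; finite under the L^2 hypotheses) *)
Definition cov (i j : 'I_d) : R := fine (covariance P (X i) (X j)).
Definition var (i : 'I_d) : R := fine ('V_P[X i]).

Definition corr (i j : 'I_d) : R := cov i j / Num.sqrt (var i * var j).

(* i ~ j  iff  max_{l <> i,j} |rho_il - rho_jl| = 0  (empty max = 0) *)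
Definition corr_sim (i j : 'I_d) : bool :=
  \big[Num.max/0]_(l | (l != i) && (l != j)) `|corr i l - corr j l| == 0.

Definition Gstar : {set {set 'I_d}} :=
  equivalence_partition corr_sim [set: 'I_d].

Definition Kstar : nat := #|Gstar|.
Definition Gk (k : 'I_Kstar) : {set 'I_d} := enum_val k.

Definition is_selection (J : 'I_Kstar -> 'I_d) : Prop := forall k, J k \in Gk k.

Definition SigmaJ (J : 'I_Kstar -> 'I_d) : 'M[R]_Kstar :=
  \matrix_(k, l) cov (J k) (J l).
End defs.

Definition simplex {R : realType} (K : nat) : set 'cV[R]_K :=
  [set w | \sum_(k < K) w k 0 = 1 /\ forall k, 0 <= w k 0].

(* min { w^T S w : w in simplex } (the minimum exists by compactness,
   so it coincides with the infimum) *)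
Definition varmin {R : realType} {K : nat} (S : 'M[R]_K) : R :=
  inf [set (w^T *m S *m w) 0 0 | w in @simplex R K].

From Pilot Require Import Defs.
From HB Require Import structures.
From mathcomp Require Import all_boot all_order all_algebra.
From mathcomp Require Import all_classical all_reals all_analysis.
From mathcomp Require Import ring.
Import Order.TTheory GRing.Theory Num.Theory.
Local Open Scope ring_scope.

(* Assets of one class have identical correlations with every other asset,
   so corr (J' k) (J' l) = corr (J k) (J l) for k != l (and both are 1 for
   k = l).  Writing cov = sd * corr * sd this gives the rescaling identity
       Sigma_J' = diag(r) Sigma_J diag(r),   r_k = sd (J' k) / sd (J k),
   and for J' = J^* all factors r_k lie in (0, 1].  The theorem then follows
   from a fact about matrices: for a positive semidefinite S and factors
   0 < r_k <= 1, replacing S by diag(r) S diag(r) cannot increase the minimum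
   of w^T S w over the simplex.  Indeed, for w in the simplex the vector
   w' = (w_k / r_k)_k / t, with t = sum_k w_k / r_k >= 1, is in the simplex
   and w'^T diag(r) S diag(r) w' = w^T S w / t^2 <= w^T S w. *)

Section rescaling.
Variables (R : realType) (K : nat).

Definition quad (S : 'M[R]_K) (w : 'cV[R]_K) : R := (w^T *m S *m w) 0 0.

Definition psd (S : 'M[R]_K) : Prop := forall w, 0 <= quad S w.

Definition rescale (r : 'I_K -> R) (S : 'M[R]_K) : 'M[R]_K :=
  \matrix_(k, l) (r k * S k l * r l).

Lemma quadE S w : quad S w = \sum_l \sum_k w k 0 * S k l * w l 0.
Proof.
rewrite /quad !mxE; apply: eq_bigr => l _; rewrite !mxE mulr_suml.
by apply: eq_bigr => k _; rewrite !mxE.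
Qed.

Lemma quadZ S c w : quad S (c *: w) = c ^+ 2 * quad S w.
Proof.
rewrite !quadE mulr_sumr; apply: eq_bigr => l _; rewrite mulr_sumr.
by apply: eq_bigr => k _; rewrite !mxE; ring.
Qed.

Lemma quad_rescale r S w :
  quad (rescale r S) w = quad S (\col_k (r k * w k 0)).
Proof.
rewrite !quadE; apply: eq_bigr => l _; apply: eq_bigr => k _.
by rewrite !mxE; ring.
Qed.

Lemma psd_rescale r S : psd S -> psd (rescale r S).
Proof. by move=> S_psd w; rewrite quad_rescale. Qed.

Lemma inf_le_dominated (E F : set R) : has_lbound E -> nonempty F ->
  (forall y, F y -> exists2 x, E x & x <= y) -> inf E <= inf F.
Proof.
move=> lbE [y0 Fy0] dom; apply: lb_le_inf => [|y Fy]; first by exists y0.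
by have [x Ex le_xy] := dom y Fy; apply: le_trans le_xy; apply: ge_inf.
Qed.

Lemma simplex_rescale (r : 'I_K -> R) S w : psd S -> (forall k, 0 < r k <= 1) ->
  simplex K w -> exists2 w', simplex K w' & quad (rescale r S) w' <= quad S w.
Proof.
move=> S_psd r01 [w1 w0].
have r_gt0 k : 0 < r k by case/andP: (r01 k).
pose t := \sum_k w k 0 / r k.
have t_ge1 : 1 <= t.
  rewrite -w1; apply: ler_sum => k _; rewrite ler_pdivlMr // ler_piMr //.
  by case/andP: (r01 k).
have t_gt0 : 0 < t by apply: lt_le_trans t_ge1.
exists (\col_k (w k 0 / r k / t)).
  split => [|k]; last by rewrite mxE !divr_ge0 // ltW.
  under eq_bigr do rewrite mxE.
  by rewrite -mulr_suml divff // gt_eqF.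
rewrite quad_rescale.
have -> : \col_k (r k * (\col_k (w k 0 / r k / t)) k 0) = t^-1 *: w.
  apply/matrixP => k l; rewrite !mxE (ord1 l); field.
  by rewrite !gt_eqF ?r_gt0 ?t_gt0.
rewrite quadZ ler_piMl //.
rewrite exprVn invr_le1 ?unitfE ?exprn_gt0 ?gt_eqF //.
- by rewrite expr_ge1 // ltW.
- by rewrite exprn_gt0.
Qed.

Lemma varmin_rescale (r : 'I_K -> R) S : psd S -> (forall k, 0 < r k <= 1) ->
  varmin (rescale r S) <= varmin S.
Proof.
move=> S_psd r01; rewrite /varmin.
have [[w0 w0_simplex]|no_simplex] := pselect (exists w : 'cV[R]_K, simplex K w); last first.
  suff -> : @simplex R K = set0 by rewrite !image_set0.
  by apply/seteqP; split => w // w_simplex; apply: no_simplex; exists w.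
apply: inf_le_dominated.
- by exists 0 => _ [w _ <-]; apply: psd_rescale.
- by exists (quad S w0), w0.
- move=> _ [w w_simplex <-].
  have [w' w'_simplex le_w'w] := simplex_rescale r S w S_psd r01 w_simplex.
  by exists (quad (rescale r S) w') => //; exists w'.
Qed.
End rescaling.
Arguments quad {R K}.
Arguments psd {R K}.
Arguments rescale {R K}.

Section correlation_classes.
Context {dT : measure_display} {T : measurableType dT} {R : realType}.
Variable P : probability T R.
Context {d : nat}.
Variable X : 'I_d -> T -> R.

Local Notation corr := (corr P X).
Local Notation corr_sim := (corr_sim P X).
Local Notation Gk := (Gk P X).

Lemma corrC i j : corr i j = corr j i.
Proof. by rewrite /Defs.corr /cov covarianceC (mulrC (var P X i)). Qed.

Lemma corr_simP i j : corr_sim i j <->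
  (forall l, l != i -> l != j -> corr i l = corr j l).
Proof.
rewrite /Defs.corr_sim; split => [/eqP max0 l li lj | same].
  apply/eqP; rewrite -subr_eq0 -normr_eq0 eq_le normr_ge0 andbT -[X in _ <= X]max0.
  by rewrite (bigD1 l) /= ?li ?lj // le_max lexx.
apply/eqP; apply: (big_ind (fun x => x = 0)) => [//|x y -> ->|l /andP[li lj]].
  exact: maxxx.
by rewrite same // subrr normr0.
Qed.

Lemma corr_sim_sym i j : corr_sim i j -> corr_sim j i.
Proof. by move/corr_simP=> same; apply/corr_simP => l lj li; rewrite same. Qed.
Arguments corr_sim_sym {i j}.

Lemma corr_sim_trans i j k : corr_sim i j -> corr_sim j k -> corr_sim i k.
Proof.
move=> /corr_simP sim_ij /corr_simP sim_jk; apply/corr_simP => l li lk.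
have [lj|lj] := eqVneq l j; last by rewrite sim_ij // sim_jk.
subst l; have [<-//|ik] := eqVneq i k.
have ij : i != j by rewrite eq_sym.
have kj : k != j by rewrite eq_sym.
by rewrite (corrC i j) (sim_jk i ij ik) corrC (sim_ij k _ kj) 1?corrC // eq_sym.
Qed.
Arguments corr_sim_trans {i j k}.

Lemma Gk_class k : exists x, forall y, (y \in Gk k) = corr_sim x y.
Proof.
have := enum_valP k; rewrite /Gk /Gstar /equivalence_partition.
by case/imsetP=> x _ ->; exists x => y; rewrite !inE.
Qed.

Lemma Gk_sim k i j : i \in Gk k -> j \in Gk k -> corr_sim i j.
Proof.
have [x Gk_x] := Gk_class k; rewrite !Gk_x => xi xj.
exact: corr_sim_trans (corr_sim_sym xi) xj.
Qed.
Arguments Gk_sim {k i j}.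

Lemma Gk_disjoint k l i j : k != l -> i \in Gk k -> j \in Gk l -> i != j.
Proof.
move=> kl ik jl; apply: contraNneq kl => eq_ij; rewrite {}eq_ij in ik.
have [x Gk_x] := Gk_class k; have [y Gl_y] := Gk_class l.
move: ik jl; rewrite Gk_x Gl_y => xj yj.
have xy := corr_sim_trans xj (corr_sim_sym yj).
apply/eqP/enum_val_inj/setP => u; rewrite -/(Gk k) -/(Gk l) Gk_x Gl_y.
by apply/idP/idP; [apply: corr_sim_trans (corr_sim_sym xy) | apply: corr_sim_trans xy].
Qed.
Arguments Gk_disjoint {k l i j}.

Lemma corr_sim_congr i i' j j' : corr_sim i i' -> corr_sim j j' ->
  j != i -> j != i' -> i' != j' -> corr i j = corr i' j'.
Proof.
move=> /corr_simP sim_i /corr_simP sim_j ji ji' i'j'.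
by rewrite sim_i // (corrC i' j) (sim_j i' _ i'j') 1?eq_sym // (corrC j').
Qed.

Lemma corr_selection J J' k l : is_selection P X J -> is_selection P X J' ->
  k != l -> corr (J k) (J l) = corr (J' k) (J' l).
Proof.
move=> selJ selJ' kl; apply: corr_sim_congr.
- exact: Gk_sim (selJ k) (selJ' k).
- exact: Gk_sim (selJ l) (selJ' l).
- by rewrite eq_sym (Gk_disjoint kl (selJ k) (selJ l)).
- by rewrite eq_sym (Gk_disjoint kl (selJ' k) (selJ l)).
- exact: Gk_disjoint kl (selJ' k) (selJ' l).
Qed.
End correlation_classes.

Section covariance_matrix.
Context {dT : measure_display} {T : measurableType dT} {R : realType}.
Variable P : probability T R.

Lemma covariance_finE (f g : T -> R) : f \in Lfun P 2%:E -> g \in Lfun P 2%:E ->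
  covariance P f g = (fine (covariance P f g))%:E.
Proof.
move=> f2 g2; have Pfin := fin_num_measure P _ measurableT.
by rewrite fineK // covariance_fin_num ?Lfun2_mul_Lfun1 ?(Lfun_subset12 Pfin).
Qed.

Section linear_combination.
Variables (I : Type) (F : I -> T -> R) (v : I -> R).
Hypothesis F2 : forall k, F k \in Lfun P 2%:E.

Definition lincomb (r : seq I) : T -> R := fun t => \sum_(k <- r) v k * F k t.

Lemma lincomb_nil : lincomb [::] = cst 0.
Proof. by apply/funext => t; rewrite /lincomb big_nil. Qed.

Lemma lincombE a r : lincomb (a :: r) = ((v a \o* F a) \+ lincomb r)%R.
Proof. by apply/funext => t; rewrite /lincomb big_cons mulrC. Qed.

Lemma scaled_Lfun2 a : (v a \o* F a)%R \in Lfun P 2%:E.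
Proof. by apply: Lfun_scale; rewrite ?ler1n. Qed.

Lemma lincomb_Lfun2 r : lincomb r \in Lfun P 2%:E.
Proof.
elim: r => [|a r IH]; first by rewrite lincomb_nil Lfun_cst.
by rewrite lincombE; apply: rpredD (scaled_Lfun2 a) IH; rewrite lee_fin ler1n.
Qed.

Lemma covariance_lincomb_l r (Z : T -> R) : Z \in Lfun P 2%:E ->
  covariance P (lincomb r) Z = (\sum_(k <- r) v k * fine (covariance P (F k) Z))%:E.
Proof.
move=> Z2; have Pfin := fin_num_measure P _ measurableT.
elim: r => [|a r IH]; first by rewrite lincomb_nil covariance_cst_l big_nil.
rewrite lincombE covarianceDl ?scaled_Lfun2 ?lincomb_Lfun2 // IH.
rewrite covarianceZl ?Lfun2_mul_Lfun1 ?(Lfun_subset12 Pfin) //.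
by rewrite big_cons EFinD EFinM -covariance_finE.
Qed.
End linear_combination.
Arguments lincomb {I}.

Lemma covariance_matrix_psd n (F : 'I_n -> T -> R) :
  (forall k, F k \in Lfun P 2%:E) ->
  psd (\matrix_(k, l) fine (covariance P (F k) (F l))).
Proof.
move=> F2 w; pose Y := lincomb F (fun k => w k 0) (index_enum 'I_n).
suff -> : quad (\matrix_(k, l) fine (covariance P (F k) (F l))) w =
          fine (covariance P Y Y) by apply/fine_ge0/variance_ge0.
rewrite quadE covariance_lincomb_l ?lincomb_Lfun2 //=; apply: eq_bigr => l _.
rewrite covarianceC covariance_lincomb_l //= mulr_sumr; apply: eq_bigr => k _.
by rewrite mxE mulrC.
Qed.
End covariance_matrix.

Section standardization.
Context {dT : measure_display} {T : measurableType dT} {R : realType}.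
Variable P : probability T R.
Context {d : nat}.
Variable X : 'I_d -> T -> R.
Hypothesis var_gt0 : forall i, 0 < var P X i.

Definition sd (i : 'I_d) : R := Num.sqrt (var P X i).

Lemma sd_gt0 i : 0 < sd i.
Proof. by rewrite sqrtr_gt0. Qed.

Lemma cov_corr i j : cov P X i j = sd i * corr P X i j * sd j.
Proof.
rewrite /corr sqrtrM ?ltW // -/(sd i) -/(sd j).
by field; rewrite !gt_eqF ?sd_gt0.
Qed.

Lemma corr_self i : corr P X i i = 1.
Proof.
rewrite /corr (_ : cov P X i i = var P X i) // -expr2 sqrtr_sqr gtr0_norm //.
by rewrite divff // gt_eqF.
Qed.

Lemma SigmaJ_rescale J J' : is_selection P X J -> is_selection P X J' ->
  SigmaJ P X J' = rescale (fun k => sd (J' k) / sd (J k)) (SigmaJ P X J).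
Proof.
move=> selJ selJ'; apply/matrixP => k l; rewrite !mxE !cov_corr.
have -> : corr P X (J' k) (J' l) = corr P X (J k) (J l).
  have [<-|kl] := eqVneq k l; first by rewrite !corr_self.
  exact: corr_selection.
by field; rewrite !gt_eqF ?sd_gt0.
Qed.
End standardization.
Arguments SigmaJ_rescale {dT T R P d X} var_gt0 {J J'}.

Theorem theorem2 (dT : measure_display) (T : measurableType dT) (R : realType)
  (P : probability T R) (d : nat) (X : 'I_d -> {RV P >-> R})
  (hL2 : forall i, (X i : T -> R) \in Lfun P 2%:E)
  (hpos : forall i, (0 < 'V_P[X i])%E)
  (Jstar : 'I_(Kstar P X) -> 'I_d)
  (hJstar : is_selection P X Jstar)
  (hargmin : forall k, forall j, j \in Gk P X k ->
      var P X (Jstar k) <= var P X j) :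
  forall J : 'I_(Kstar P X) -> 'I_d, is_selection P X J ->
    varmin (SigmaJ P X Jstar) <= varmin (SigmaJ P X J).
Proof.
move=> J hJ.
have var_gt0 i : 0 < var P X i by rewrite -lte_fin fineK ?variance_fin_num.
have ratio_01 k : 0 < sd P X (Jstar k) / sd P X (J k) <= 1.
  rewrite divr_gt0 ?sd_gt0 //= ler_pdivrMr ?sd_gt0 // mul1r.
  by rewrite ler_sqrt ?(ltW (var_gt0 _)) // hargmin.
rewrite (SigmaJ_rescale var_gt0 hJ hJstar); apply: varmin_rescale ratio_01.
exact: covariance_matrix_psd (fun k => X (J k)) (fun k => hL2 (J k)).
Qed.
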